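(* Let $p$ be a prime and let $P$ be a finite $p$-group which is a Roquette group. Then $P$ has no non-trivial expansive subgroup whose $P$-core is trivial.
   Context: A finite group $G$ is a Roquette group if all its normal abelian subgroups are cyclic. For $g\in G$ and $T\le G$ write ${}^gT=gTg^{-1}$. For a subgroup $X$ of a group $H$, the $H$-core of $X$ is $\bigcap_{h\in H}hXh^{-1}$, the largest normal subgroup of $H$ contained in $X$. A subgroup $T$ of a finite group $G$ is expansive in $G$ if for every $g\in G\setminus N_G(T)$, the $N_G(T)$-core of the subgroup $({}^gT\cap N_G(T))\,T$ contains $T$ properly. ''Non-trivial'' means $T\neq 1$. *)

From mathcomp Require Import all_boot all_fingroup all_solvable.
Set Implicit Arguments. Unset Strict Implicit. Unset Printing Implicit Defensive.
Local Open Scope group_scope.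

Definition roquette (gT : finGroupType) (G : {set gT}) : Prop :=
  forall A : {group gT}, A <| G -> abelian A -> cyclic A.

(* Paper convention: ^gT = g T g^-1, which is  T :^ g^-1  in mathcomp
   (mathcomp's T :^ x = x^-1 T x). *)
Definition lconj (gT : finGroupType) (g : gT) (T : {set gT}) : {set gT} :=
  T :^ g^-1.

Definition expansive (gT : finGroupType) (G T : {set gT}) : Prop :=
  T \subset G /\
  forall g, g \in G -> g \notin 'N_G(T) ->
    T \proper gcore ((lconj g T :&: 'N_G(T)) * T) 'N_G(T).

From mathcomp Require Import all_boot all_fingroup all_solvable.
Set Implicit Arguments.
Unset Strict Implicit.
Unset Printing Implicit Defensive.
Local Open Scope group_scope.

(* If P is abelian, every subgroup is normal, so a core-free T is trivial.
   Otherwise a Roquette p-group has a cyclic normal subgroup X of index 2.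
   A core-free T meets X trivially (subgroups of the cyclic normal X are
   normal), so T = <[t]> with t an involution. Expansiveness forces every
   conjugate t^h to normalize <[t]>, hence to commute with t; thus the
   normal closure of t is abelian, hence cyclic, and in a cyclic group the
   conjugates of t (all of the same order) generate the same subgroup:
   <[t]> is normal, contradicting core-freeness. *)

Section Roquette.

Variables (gT : finGroupType) (p : nat) (P : {group gT}).
Hypotheses (pP : p.-group P) (roqP : roquette P).

Lemma roquette_nonabelian_cyclic_index2 : ~~ abelian P ->
  exists X : {group gT}, [/\ X <| P, cyclic X & #|P : X| = 2].
Proof.
move=> ncPP.
have [X maxX]: {X | [max X | X <| P & abelian X]}.
  by apply: ex_maxgroup; exists 1%G; rewrite normal1 abelian1.
have /andP[nsXP cX] := maxgroupp maxX.
(* X is self-centralizing; the alternative of cyclic_SCN, a characteristic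
   elementary abelian subgroup of rank 2, is ruled out by the Roquette
   property. *)
have cycX : cyclic X by apply: roqP.
have [[_ iX _] | [E [_ _ _]]] := cyclic_SCN pP (max_SCN pP maxX) ncPP cycX.
  by exists X.
rewrite 2!inE -andbA => /and3P[_ abelE dimE2] charE.
have := roqP (char_normal charE) (abelem_abelian abelE).
by rewrite (abelem_cyclic abelE) (eqP dimE2).
Qed.

Lemma roquette_cycle_norm (t : gT) : t \in P ->
  (forall h, h \in P -> commute t (t ^ h)) -> P \subset 'N(<[t]>).
Proof.
move=> tP comm_t; pose W := <<t ^: P>>.
have nsWP : W <| P.
  rewrite /normal gen_subG class_subG //=.
  exact: subset_trans (class_norm t P) (norm_gen _).
have cWW : abelian W.
  rewrite abelian_gen; apply/centsP => _ /imsetP[h Ph ->] _ /imsetP[k Pk ->].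
  have -> : t ^ k = (t ^ (k * h^-1)) ^ h by rewrite -conjgM mulgKV.
  by rewrite /commute -!conjMg comm_t // groupM ?groupV.
apply/normsP => h Ph; rewrite -cycleJ; apply/eqP.
rewrite (eq_subG_cyclic (roqP nsWP cWW)) ?cycle_subG ?mem_gen ?memJ_class
  ?class_refl //.
by rewrite -!orderE orderJ.
Qed.

End Roquette.

Lemma gcore1_TI_cyclic_normal (gT : finGroupType) (G T X : {group gT}) :
  X <| G -> cyclic X -> gcore T G = 1 -> T :&: X = 1.
Proof.
move=> nsXG cycX coreT; apply/trivgP; rewrite -coreT.
apply: gcore_max; first exact: subsetIl.
apply/normal_norm/(char_normal_trans _ nsXG).
by rewrite sub_cyclic_char // subsetIr.
Qed.

Lemma card_TI_index2 (gT : finGroupType) (G T X : {group gT}) :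
  T \subset G -> X \subset G -> T :&: X = 1 -> #|G : X| = 2 -> T :!=: 1 ->
  #|T| = 2.
Proof.
move=> sTG sXG tiTX iX ntT.
have := subset_leq_card (mul_subG sTG sXG).
rewrite TI_cardMg // -(Lagrange sXG) iX mulnC leq_pmul2l ?cardG_gt0 //.
by have := cardG_gt1 T; rewrite ntT; case: #|T| => [|[|[|]]].
Qed.

Lemma order2_cycle_nontriv_eq (gT : finGroupType) (t y : gT) :
  #[t] = 2 -> y \in <[t]> -> y != 1 -> y = t.
Proof.
move=> ot /cycleP[i ->]; rewrite -expg_mod_order ot.
have : i %% 2 < 2 by rewrite ltn_pmod.
by case: (i %% 2) => [|[|]] //; rewrite expg0 eqxx.
Qed.

Lemma order2_norm_cycle_fix (gT : finGroupType) (t x : gT) :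
  #[t] = 2 -> x \in 'N(<[t]>) -> t ^ x = t.
Proof.
move=> ot nTx; apply: order2_cycle_nontriv_eq => //.
  by rewrite memJ_norm ?cycle_id.
by rewrite -(conj1g x) (inj_eq (@conjg_inj _ x)) -order_eq1 ot.
Qed.

Lemma expansive_conj_meet_ntriv (gT : finGroupType) (G T : {group gT}) g :
  expansive G T -> g \in G -> g \notin 'N_G(T) -> T :^ g^-1 :&: 'N_G(T) != 1.
Proof.
case=> _ expT Gg nTg; apply: contraTneq (expT g Gg nTg) => /= ->.
by rewrite mul1g properE gcore_sub andbF.
Qed.

Lemma expansive_order2_commute_conj (gT : finGroupType) (G : {group gT}) t h :
  expansive G <[t]> -> #[t] = 2 -> h \in G -> commute t (t ^ h).
Proof.
move=> expT ot Gh; have [nTh | nTh] := boolP (h \in 'N(<[t]>)).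
  by rewrite order2_norm_cycle_fix //; apply: commute_refl.
have Gh' : h^-1 \in G by rewrite groupV.
have nTh' : h^-1 \notin 'N_G(<[t]>) by rewrite inE Gh' groupV.
have := expansive_conj_meet_ntriv expT Gh' nTh'; rewrite invgK.
case/trivgPn => u /setIP[uTh /setIP[_ nTu]] ntu.
have defu : u = t ^ h.
  by apply: order2_cycle_nontriv_eq; rewrite ?orderJ ?cycleJ.
by apply/commgP/conjg_fixP; rewrite -defu order2_norm_cycle_fix // -defu.
Qed.

Theorem mainTheorem1 (gT : finGroupType) (p : nat) (P : {group gT}) :
  prime p -> p.-group P -> roquette P ->
  ~ (exists T : {group gT},
       [/\ T :!=: 1, expansive P T & gcore T P = 1]).
Proof.
move=> _ pP roqP [T [ntT expT coreT]]; have sTP := expT.1.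
suff nTP : P \subset 'N(T).
  by have := gcore_max (subxx T) nTP; rewrite coreT subG1 (negPf ntT).
have [cPP | ncPP] := boolP (abelian P); first exact: sub_abelian_norm.
have [X [nsXP cycX iX]] := roquette_nonabelian_cyclic_index2 pP roqP ncPP.
have tiTX := gcore1_TI_cyclic_normal nsXP cycX coreT.
have oT := card_TI_index2 sTP (normal_sub nsXP) tiTX iX ntT.
have [t defT] : exists t, T :=: <[t]> by apply/cyclicP; rewrite prime_cyclic ?oT.
have ot : #[t] = 2 by rewrite orderE -defT.
rewrite defT in sTP expT *; apply: roquette_cycle_norm => //.
  by rewrite -cycle_subG.
by move=> h; apply: expansive_order2_commute_conj.
Qed.
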